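(* (Compatibility is transitive.) For all matches $(p,\sigma)$, $(q,\rho)$, $(r,\theta)$: if $p,\sigma\sqsubseteq q,\rho$ and $q,\rho\sqsubseteq r,\theta$, then $p,\sigma\sqsubseteq r,\theta$.
   Context: CPC patterns over a countable set of names: $p ::= \lambda x \mid x \mid \ulcorner x\urcorner \mid p\bullet p$ (binding name, variable name, protected name, compound). ${\sf bn}(p)$, ${\sf vn}(p)$, ${\sf pn}(p)$ are the sets of binding, variable and protected names of $p$; ${\sf fn}(p)={\sf vn}(p)\cup{\sf pn}(p)$. Patterns are well formed (binding names pairwise distinct and distinct from free names). Communicable patterns contain no protected or binding names. A substitution is a finite partial function from names to communicable patterns; $\hat\sigma$ acts on patterns by $\hat\sigma x=x$, $\hat\sigma\ulcorner x\urcorner=\ulcorner x\urcorner$, $\hat\sigma(\lambda x)=\sigma(x)$ if $x\in{\sf dom}(\sigma)$ else $\lambda x$, $\hat\sigma(p\bullet q)=\hat\sigma p\bullet\hat\sigma q$. A match $(p,\sigma)$ is a pattern $p$ and substitution $\sigma$ with ${\sf dom}(\sigma)={\sf bn}(p)$. Compatibility $p,\sigma\sqsubseteq q,\rho$ is the least relation between matches with: $p,\sigma\sqsubseteq\lambda y,\{\hat\sigma p/y\}$ if ${\sf fn}(p)=\emptyset$; $n,\{\}\sqsubseteq n,\{\}$; $\ulcorner n\urcorner,\{\}\sqsubseteq\ulcorner n\urcorner,\{\}$; $\ulcorner n\urcorner,\{\}\sqsubseteq n,\{\}$; $p_1\bullet p_2,\sigma_1\cup\sigma_2\sqsubseteq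 q_1\bullet q_2,\rho_1\cup\rho_2$ if $p_i,\sigma_i\sqsubseteq q_i,\rho_i$ for $i=1,2$. *)

From Stdlib Require Import List Arith.
Import ListNotations.

Definition name := nat.

(* p ::= \lambda x | x | \ulcorner x \urcorner | p \bullet p *)
Inductive pattern : Type :=
| PBind : name -> pattern
| PVar  : name -> pattern
| PProt : name -> pattern
| PComp : pattern -> pattern -> pattern.

Fixpoint bn (p : pattern) : list name :=
  match p with
  | PBind x => [x] | PVar _ => [] | PProt _ => []
  | PComp p q => bn p ++ bn q end.

Fixpoint vn (p : pattern) : list name :=
  match p with
  | PVar x => [x] | PBind _ => [] | PProt _ => []
  | PComp p q => vn p ++ vn q end.

Fixpoint pn (p : pattern) : list name :=
  match p with
  | PProt x => [x] | PBind _ => [] | PVar _ => []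
  | PComp p q => pn p ++ pn q end.

Definition fn (p : pattern) : list name := vn p ++ pn p.

Definition well_formed (p : pattern) : Prop :=
  NoDup (bn p) /\ (forall x, In x (bn p) -> ~ In x (fn p)).

Definition communicable (p : pattern) : Prop := bn p = [] /\ pn p = [].

(* Substitutions: partial functions from names to (communicable) patterns.
   Finiteness of the domain is enforced for matches by dom(sigma) = bn(p). *)
Definition subst := name -> option pattern.

Definition dom (s : subst) (x : name) : Prop := s x <> None.

Definition empty_subst : subst := fun _ => None.

Definition single_subst (y : name) (v : pattern) : subst :=
  fun x => if Nat.eqb x y then Some v else None.

Definition union_subst (s1 s2 : subst) : subst :=
  fun x => match s1 x with Some v => Some v | None => s2 x end.

Definition subst_eq (s1 s2 : subst) : Prop := forall x, s1 x = s2 x.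

Fixpoint apply_subst (s : subst) (p : pattern) : pattern :=
  match p with
  | PVar x => PVar x
  | PProt x => PProt x
  | PBind x => match s x with Some v => v | None => PBind x end
  | PComp p q => PComp (apply_subst s p) (apply_subst s q)
  end.

Definition is_match (p : pattern) (s : subst) : Prop :=
  well_formed p /\
  (forall x, dom s x <-> In x (bn p)) /\
  (forall x v, s x = Some v -> communicable v).

(* Compatibility p,sigma ⊑ q,rho : the least relation between matches closed
   under the five rules.  Substitutions are compared extensionally. *)
Inductive compat : pattern -> subst -> pattern -> subst -> Prop :=
| compat_bind : forall p s y r,
    is_match p s -> fn p = [] ->
    subst_eq r (single_subst y (apply_subst s p)) ->
    compat p s (PBind y) r
| compat_var : forall n s r,
    subst_eq s empty_subst -> subst_eq r empty_subst ->
    compat (PVar n) s (PVar n) r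
| compat_prot : forall n s r,
    subst_eq s empty_subst -> subst_eq r empty_subst ->
    compat (PProt n) s (PProt n) r
| compat_prot_var : forall n s r,
    subst_eq s empty_subst -> subst_eq r empty_subst ->
    compat (PProt n) s (PVar n) r
| compat_comp : forall p1 p2 q1 q2 s1 s2 r1 r2 s r,
    compat p1 s1 q1 r1 -> compat p2 s2 q2 r2 ->
    subst_eq s (union_subst s1 s2) -> subst_eq r (union_subst r1 r2) ->
    is_match (PComp p1 p2) s -> is_match (PComp q1 q2) r ->
    compat (PComp p1 p2) s (PComp q1 q2) r.

(* Induct on the first derivation and invert the second.  Two facts carry the
   argument.  First, compatibility with a closed pattern [q] (one with
   [fn q = []]) forces [p] to be closed as well, with [rho q = sigma p]; this
   settles every case where the second step is the binding rule.  Second, a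
   match on a compound pattern splits into matches on its components in only
   one way up to extensional equality, because the binding names of the two
   components are disjoint; so in the compound/compound case the two
   decompositions of the middle match coincide and the induction hypotheses
   compose. *)

From Stdlib Require Import List Arith.
Import ListNotations.

Lemma NoDup_app_disjoint (A : Type) (l1 l2 : list A) (x : A) :
  NoDup (l1 ++ l2) -> In x l1 -> In x l2 -> False.
Proof.
  intros Hnd H1 H2.
  apply in_split in H2 as (u & w & ->).
  rewrite app_assoc in Hnd.
  apply (NoDup_remove_2 _ _ _ Hnd).
  rewrite <- app_assoc. apply in_or_app. now left.
Qed.

Lemma fn_PComp_nil a b : fn (PComp a b) = [] <-> fn a = [] /\ fn b = [].
Proof.
  unfold fn; simpl. split.
  - intros H.
    apply app_eq_nil in H as [Hv Hp].
    apply app_eq_nil in Hv as [-> ->]. apply app_eq_nil in Hp as [-> ->].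
    auto.
  - intros [Ha Hb].
    apply app_eq_nil in Ha as [-> ->]. apply app_eq_nil in Hb as [-> ->].
    reflexivity.
Qed.

Lemma apply_subst_ext_on_bn s s' p :
  (forall x, In x (bn p) -> s x = s' x) -> apply_subst s p = apply_subst s' p.
Proof.
  induction p as [x|x|x|p1 IH1 p2 IH2]; simpl; intros Hagree; auto.
  - now rewrite Hagree by auto.
  - rewrite IH1, IH2; auto; intros x Hx; apply Hagree, in_or_app; auto.
Qed.

Lemma apply_subst_communicable s p :
  fn p = [] -> (forall x, In x (bn p) -> dom s x) ->
  (forall x v, s x = Some v -> communicable v) ->
  communicable (apply_subst s p).
Proof.
  induction p as [x|x|x|p1 IH1 p2 IH2]; simpl; intros Hfn Hdom Hcomm;
    try discriminate.
  - specialize (Hdom x (or_introl eq_refl)). unfold dom in Hdom.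
    destruct (s x) eqn:Hsx; [eauto | congruence].
  - apply fn_PComp_nil in Hfn as [Hfn1 Hfn2].
    destruct (IH1 Hfn1) as [Hb1 Hp1]; auto.
    { intros; apply Hdom, in_or_app; auto. }
    destruct (IH2 Hfn2) as [Hb2 Hp2]; auto.
    { intros; apply Hdom, in_or_app; auto. }
    split; simpl; now rewrite ?Hb1, ?Hb2, ?Hp1, ?Hp2.
Qed.

Lemma is_match_subst_eq p s s' : is_match p s -> subst_eq s s' -> is_match p s'.
Proof.
  intros (Hwf & Hdom & Hcomm) Hs. split; [exact Hwf | split].
  - intros x. unfold dom. rewrite <- Hs. apply Hdom.
  - intros x v Hx. rewrite <- Hs in Hx. eauto.
Qed.

Lemma is_match_empty p s : bn p = [] -> subst_eq s empty_subst -> is_match p s.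
Proof.
  intros Hbn Hs. unfold is_match, well_formed, dom. rewrite Hbn.
  split; [split; [constructor | intros x []] | split].
  - intros x. split; [|intros []]. intros Hx. exfalso. apply Hx, Hs.
  - intros x v Hx. rewrite Hs in Hx. discriminate.
Qed.

Lemma is_match_PBind y v r :
  communicable v -> subst_eq r (single_subst y v) -> is_match (PBind y) r.
Proof.
  intros Hv Hr. split; [|split].
  - split; [repeat constructor; simpl; tauto|]. unfold fn; simpl; tauto.
  - intros x. unfold dom. rewrite Hr. unfold single_subst. simpl.
    destruct (Nat.eqb_spec x y) as [-> | Hxy].
    + split; [auto | congruence].
    + split; [congruence | intros [-> | []]; congruence].
  - intros x w Hx. rewrite Hr in Hx. unfold single_subst in Hx.
    destruct (Nat.eqb x y); inversion Hx; subst; exact Hv.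
Qed.

Lemma compat_is_match p s q r : compat p s q r -> is_match p s /\ is_match q r.
Proof.
  induction 1 as [p s y r Hm Hfn Hr | | | | ]; auto using is_match_empty.
  split; [exact Hm|].
  apply (is_match_PBind y (apply_subst s p)); [|exact Hr].
  destruct Hm as (_ & Hdom & Hcomm).
  apply apply_subst_communicable; auto. intros; apply Hdom; auto.
Qed.

Lemma union_subst_agree_on_bn a b s s1 s2 :
  is_match (PComp a b) s -> subst_eq s (union_subst s1 s2) ->
  is_match a s1 -> is_match b s2 ->
  (forall x, In x (bn a) -> s x = s1 x) /\ (forall x, In x (bn b) -> s x = s2 x).
Proof.
  intros ((Hnd & _) & _) Hs (_ & Hdom1 & _) (_ & Hdom2 & _). simpl in Hnd.
  split; intros x Hx; rewrite Hs; unfold union_subst;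
    destruct (s1 x) eqn:Hs1; auto; exfalso.
  - apply Hdom1 in Hx. auto.
  - assert (Hx1 : In x (bn a)) by (apply Hdom1; unfold dom; congruence).
    exact (NoDup_app_disjoint _ _ _ _ Hnd Hx1 Hx).
Qed.

Lemma subst_eq_of_agree_on_bn q r1 r2 :
  is_match q r1 -> is_match q r2 ->
  (forall x, In x (bn q) -> r1 x = r2 x) -> subst_eq r1 r2.
Proof.
  intros (_ & Hdom1 & _) (_ & Hdom2 & _) Hagree x.
  destruct (r1 x) eqn:Hr1.
  - rewrite <- Hagree, Hr1; auto. apply Hdom1. unfold dom. congruence.
  - destruct (r2 x) eqn:Hr2; auto. exfalso.
    apply (proj2 (Hdom1 x)); auto. apply Hdom2. unfold dom. congruence.
Qed.

Lemma compat_subst_eq p s q r s' r' :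
  compat p s q r -> subst_eq s s' -> subst_eq r r' -> compat p s' q r'.
Proof.
  intros H Hs Hr. destruct H.
  - apply compat_bind; auto.
    + eapply is_match_subst_eq; eauto.
    + intros x. rewrite <- Hr, H1. rewrite (apply_subst_ext_on_bn s s'); auto.
  - apply compat_var; intros x; [rewrite <- Hs | rewrite <- Hr]; auto.
  - apply compat_prot; intros x; [rewrite <- Hs | rewrite <- Hr]; auto.
  - apply compat_prot_var; intros x; [rewrite <- Hs | rewrite <- Hr]; auto.
  - eapply compat_comp; eauto using is_match_subst_eq.
    + intros x; rewrite <- Hs; auto.
    + intros x; rewrite <- Hr; auto.
Qed.

Lemma compat_closed p s q r :
  compat p s q r -> fn q = [] -> fn p = [] /\ apply_subst r q = apply_subst s p.
Proof.
  induction 1 as [p s y r Hm Hfn Hr | | | |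
                  p1 p2 q1 q2 s1 s2 r1 r2 s r H1 IH1 H2 IH2 Hs Hr Hmp Hmq];
    intros Hfnq; try discriminate.
  - split; auto. simpl. rewrite Hr. unfold single_subst. now rewrite Nat.eqb_refl.
  - apply fn_PComp_nil in Hfnq as [Hfn1 Hfn2].
    destruct (IH1 Hfn1) as [Hfnp1 Happ1], (IH2 Hfn2) as [Hfnp2 Happ2].
    destruct (compat_is_match _ _ _ _ H1) as [Hmp1 Hmq1].
    destruct (compat_is_match _ _ _ _ H2) as [Hmp2 Hmq2].
    destruct (union_subst_agree_on_bn _ _ _ _ _ Hmp Hs Hmp1 Hmp2) as [Hs1 Hs2].
    destruct (union_subst_agree_on_bn _ _ _ _ _ Hmq Hr Hmq1 Hmq2) as [Hr1 Hr2].
    split; [now apply fn_PComp_nil|].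
    simpl. rewrite (apply_subst_ext_on_bn _ _ q1 Hr1), (apply_subst_ext_on_bn _ _ q2 Hr2),
      (apply_subst_ext_on_bn _ _ p1 Hs1), (apply_subst_ext_on_bn _ _ p2 Hs2), Happ1, Happ2.
    reflexivity.
Qed.

Lemma compat_trans_PBind p s q r y th :
  compat p s q r -> compat q r (PBind y) th -> compat p s (PBind y) th.
Proof.
  intros Hpq Hqy. inversion Hqy as [q' r' y' th' _ Hfnq Hth| | | | ]; subst.
  destruct (compat_closed _ _ _ _ Hpq Hfnq) as [Hfnp Happ].
  apply compat_bind; auto.
  - exact (proj1 (compat_is_match _ _ _ _ Hpq)).
  - intros x. now rewrite Hth, Happ.
Qed.

Lemma compat_PComp_inv q1 q2 t1 t2 r r1 r2 th :
  compat (PComp q1 q2) r (PComp t1 t2) th ->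
  is_match q1 r1 -> is_match q2 r2 -> subst_eq r (union_subst r1 r2) ->
  exists th1 th2, compat q1 r1 t1 th1 /\ compat q2 r2 t2 th2 /\
    subst_eq th (union_subst th1 th2) /\ is_match (PComp t1 t2) th.
Proof.
  intros Hqt Hmq1 Hmq2 Hr.
  inversion Hqt as [| | | | ? ? ? ? r1' r2' th1 th2 ? ? H1' H2' Hr' Hth Hmq Hmt];
    subst.
  destruct (compat_is_match _ _ _ _ H1') as [Hmq1' _].
  destruct (compat_is_match _ _ _ _ H2') as [Hmq2' _].
  destruct (union_subst_agree_on_bn _ _ _ _ _ Hmq Hr Hmq1 Hmq2) as [Hr1 Hr2].
  destruct (union_subst_agree_on_bn _ _ _ _ _ Hmq Hr' Hmq1' Hmq2') as [Hr1' Hr2'].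
  assert (Hsplit1 : subst_eq r1' r1).
  { apply (subst_eq_of_agree_on_bn q1); auto.
    intros x Hx. now rewrite <- Hr1, <- Hr1'. }
  assert (Hsplit2 : subst_eq r2' r2).
  { apply (subst_eq_of_agree_on_bn q2); auto.
    intros x Hx. now rewrite <- Hr2, <- Hr2'. }
  exists th1, th2.
  split; [|split; [|split]]; auto;
    eapply compat_subst_eq; eauto; intros x; reflexivity.
Qed.

Lemma compat_trans p s q r t th :
  compat p s q r -> compat q r t th -> compat p s t th.
Proof.
  intros Hpq. revert t th.
  induction Hpq as [| | | |
                    p1 p2 q1 q2 s1 s2 r1 r2 s r H1 IH1 H2 IH2 Hs Hr Hmp Hmq];
    intros t th Hqt; destruct t as [z | n' | n' | t1 t2];
    try (eapply compat_trans_PBind; [econstructor; eauto | exact Hqt]);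
    try solve [inversion Hqt; subst; eauto using compat].
  destruct (compat_is_match _ _ _ _ H1) as [_ Hmq1].
  destruct (compat_is_match _ _ _ _ H2) as [_ Hmq2].
  destruct (compat_PComp_inv _ _ _ _ _ _ _ _ Hqt Hmq1 Hmq2 Hr)
    as (th1 & th2 & Hqt1 & Hqt2 & Hth & Hmt).
  eapply compat_comp; eauto.
Qed.

Theorem proposition3p19 :
  forall (p q r : pattern) (sigma rho theta : subst),
    is_match p sigma -> is_match q rho -> is_match r theta ->
    compat p sigma q rho -> compat q rho r theta ->
    compat p sigma r theta.
Proof.
  intros p q r sigma rho theta _ _ _. apply compat_trans.
Qed.
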